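(* Let $n\geq 1$ and let $X=(\pi,w)$ be a weighted permutation of degree $n$ with total weight $|w|_1=\sum_{i=1}^n w_i\leq 2$. Then $X$ and $X^\dagger$ have the same weighted cycle type.
   Context: Let $\mathfrak{S}_n$ be the symmetric group on $\{1,\ldots,n\}$. A weighted permutation of degree $n$ is a pair $(\pi,w)$ with $\pi\in\mathfrak{S}_n$ and $w=[w_1,\ldots,w_n]\in\mathbb{Z}_{\geq 0}^n$. Its involution is $(\pi,w)^\dagger=(\pi^{-1},w_{\pi^{-1}})$, where $w_{\pi^{-1}}=[w_{\pi^{-1}(1)},\ldots,w_{\pi^{-1}(n)}]$. To $(\pi,w)$ associate the edge-weighted directed graph $G(\pi,w)$ on vertex set $\{1,\ldots,n\}$ having, for each $i$, one directed edge from $i$ to $\pi(i)$ with weight $w_i$ (a disjoint union of directed cycles). The weighted cycle type of $(\pi,w)$ is the isomorphism class of $G(\pi,w)$, where two such graphs are isomorphic if there is a bijection $f$ of vertex sets such that there is an edge of weight $a$ from $v_1$ to $v_2$ iff there is an edge of weight $a$ from $f(v_1)$ to $f(v_2)$. (Equivalently, weighted cycle types are the orbits of weighted permutations under conjugation $X\mapsto (\sigma,\mathbf{0})X(\sigma^{-1},\mathbf{0})$, $\sigma\in\mathfrak{S}_n$, with multiplication $(\pi,w)\cdot(\pi',w')=(\pi\pi',w_{\pi'}+w')$, $w_{\pi'}=[w_{\pi'(1)},\ldots,w_{\pi'(n)}]$.) *)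

From mathcomp Require Import all_boot all_order all_fingroup.
Set Implicit Arguments. Unset Strict Implicit. Unset Printing Implicit Defensive.

(* A weighted permutation of degree n: a permutation pi of 'I_n
   (= {1..n} shifted to {0..n-1}) together with weights w : 'I_n -> nat. *)
Record wperm (n : nat) := WPerm { wp_perm : {perm 'I_n}; wp_weight : {ffun 'I_n -> nat} }.

Definition total_weight n (X : wperm n) : nat := \sum_(i : 'I_n) wp_weight X i.

Definition wdagger n (X : wperm n) : wperm n :=
  WPerm (wp_perm X)^-1%g [ffun i => wp_weight X ((wp_perm X)^-1%g i)].

(* the graph G(pi,w): for each i, one edge i -> pi(i) with weight w_i.
   [edge X v1 v2 a] <=> there is an edge of weight a from v1 to v2. *)
Definition edge n (X : wperm n) (v1 v2 : 'I_n) (a : nat) : bool :=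
  [exists i : 'I_n, [&& i == v1, wp_perm X i == v2 & wp_weight X i == a]].

(* same weighted cycle type: G(X) and G(Y) are isomorphic, i.e. there is a
   bijection f of the vertex set with edge v1 -a-> v2 iff edge f v1 -a-> f v2 *)
Definition same_wcycle_type n (X Y : wperm n) : Prop :=
  exists f : {perm 'I_n},
    forall (v1 v2 : 'I_n) (a : nat), edge X v1 v2 a = edge Y (f v1) (f v2) a.

From mathcomp Require Import all_boot all_order all_fingroup zify.
Set Implicit Arguments. Unset Strict Implicit. Unset Printing Implicit Defensive.

(* G(X^dagger) is G(X) with every edge reversed, so it suffices to find a
   weight-preserving involution h of the vertices with h (pi x) = pi^-1 (h x),
   i.e. a weight-preserving reflection of every cycle of pi.  Given two
   points a, b of a cycle, u a |-> u^-1 b (u in the cyclic group <[pi]>) is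
   a well-defined reflection of that cycle because <[pi]> is abelian, and it
   exchanges a and b.  As the total weight is at most 2, a cycle carries at
   most two points of nonzero weight, both of weight 1 if there are two;
   taking them as a and b (a = b if there is at most one) gives a reflection
   that preserves the weights. *)

Section CyclicGroupOrbits.
Variables (T : finType) (p : {perm T}).
Implicit Types (u v : {perm T}) (x y : T).

Lemma cycle_commute u v : u \in <[p]>%g -> v \in <[p]>%g -> commute u v.
Proof. by move=> pu pv; apply: (centsP (cycle_abelian p)). Qed.

Lemma porbit_cycleP x y :
  reflect (exists2 u, u \in <[p]>%g & u x = y) (y \in porbit p x).
Proof.
apply: (iffP (porbitP _ _ _)) => [[i ->]|[u /cycleP[i ->] <-]]; last by exists i.
by exists (p ^+ i)%g; rewrite ?mem_cycle.
Qed.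

Lemma porbit_eq x y : y \in porbit p x -> porbit p y = porbit p x.
Proof. by move=> xy; apply/eqP; rewrite eq_porbit_mem. Qed.

Lemma porbit_cycle u x : u \in <[p]>%g -> porbit p (u x) = porbit p x.
Proof. by case/cycleP=> i ->; apply: porbit_perm. Qed.

Lemma cycle_agree_porbit u v x y :
  u \in <[p]>%g -> v \in <[p]>%g -> u x = v x -> y \in porbit p x -> u y = v y.
Proof.
move=> pu pv uv /porbit_cycleP[t pt <-].
by rewrite -!permM (cycle_commute pt pu) (cycle_commute pt pv) !permM uv.
Qed.

End CyclicGroupOrbits.

Section CycleReflection.
Variables (T : finType) (p : {perm T}) (a b : T -> T).
Hypotheses (a_porbit : forall x, a x \in porbit p x)
           (b_porbit : forall x, b x \in porbit p x).
Hypotheses (a_invariant : forall x y, y \in porbit p x -> a y = a x)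
           (b_invariant : forall x y, y \in porbit p x -> b y = b x).

(* The [pick] always succeeds (see [anchor_cycle]); its default [1] is never
   used. *)
Definition cycle_reflection x : T :=
  ((odflt 1 [pick u in <[p]>%g | u (a x) == x])^-1)%g (b x).

Lemma porbit_anchor x : porbit p (a x) = porbit p x.
Proof. exact/porbit_eq/a_porbit. Qed.

Lemma cycle_reflectionE u x :
  u \in <[p]>%g -> cycle_reflection (u (a x)) = (u^-1)%g (b x).
Proof.
move=> pu; have ux : u (a x) \in porbit p x.
  by rewrite -porbit_anchor; apply/porbit_cycleP; exists u.
rewrite /cycle_reflection (a_invariant ux) (b_invariant ux).
case: pickP => [v /andP[pv /eqP vu] | /(_ u)]; last by rewrite pu eqxx.
apply: (@cycle_agree_porbit _ p _ _ (u (a x))); rewrite ?groupV //.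
  by rewrite permK -vu permK.
by rewrite porbit_cycle // porbit_anchor.
Qed.

Lemma anchor_cycle x : exists2 u, u \in <[p]>%g & u (a x) = x.
Proof. by apply/porbit_cycleP; rewrite porbit_sym. Qed.

Lemma cycle_reflection_anchor x : cycle_reflection (a x) = b x.
Proof. by rewrite -{1}[a x]perm1 cycle_reflectionE ?group1 // invg1 perm1. Qed.

Lemma cycle_reflection_porbit x : cycle_reflection x \in porbit p x.
Proof.
have [u pu {1}<-] := anchor_cycle x; rewrite cycle_reflectionE //.
by rewrite -porbit_sym porbit_cycle ?groupV // porbit_sym.
Qed.

Lemma cycle_reflectionK : involutive cycle_reflection.
Proof.
move=> x; have [u pu ux] := anchor_cycle x.
have [t pt tb] : exists2 t, t \in <[p]>%g & t (a x) = b x.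
  by apply/porbit_cycleP; rewrite porbit_anchor.
have := cycle_reflectionE x pu; rewrite ux => ->.
rewrite -tb -permM cycle_reflectionE ?groupM ?groupV // -tb -permM.
by rewrite invMg invgK mulgA (cycle_commute pt pu) mulgK.
Qed.

Lemma cycle_reflection_perm x :
  cycle_reflection (p x) = (p^-1)%g (cycle_reflection x).
Proof.
have [u pu ux] := anchor_cycle x.
have pp : p \in <[p]>%g := cycle_id p.
have := cycle_reflectionE x pu; rewrite ux => ->.
rewrite -{1}ux -permM cycle_reflectionE ?groupM //.
by rewrite invMg -!permM (cycle_commute (groupVr pp) (groupVr pu)).
Qed.

End CycleReflection.

Lemma leq_pair_sum (T : finType) (w : T -> nat) a b :
  a != b -> w a + w b <= \sum_e w e.
Proof.
move=> ab; rewrite (bigD1 a) //= (bigD1 b) 1?eq_sym //=.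
by rewrite addnA leq_addr.
Qed.

Lemma leq_triple_sum (T : finType) (w : T -> nat) a b c :
  a != b -> a != c -> b != c -> w a + w b + w c <= \sum_e w e.
Proof.
move=> ab ac bc; rewrite (bigD1 a) //= (bigD1 b) 1?eq_sym //=.
rewrite (bigD1 c) /= 1?eq_sym ?ac 1?eq_sym ?bc //.
by rewrite !addnA leq_addr.
Qed.

Section SmallWeightCycles.
Variables (T : finType) (p : {perm T}) (w : T -> nat).
Implicit Types x y e : T.

Definition orbit_rep x := odflt x [pick e in porbit p x].

Definition first_mark x := odflt (orbit_rep x) [pick e in porbit p x | w e != 0].

Definition second_mark x :=
  odflt (first_mark x) [pick e in porbit p x | (w e != 0) && (e != first_mark x)].

Lemma orbit_rep_porbit x : orbit_rep x \in porbit p x.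
Proof. by rewrite /orbit_rep; case: pickP => //= _; apply: porbit_id. Qed.

Lemma orbit_rep_invariant x y : y \in porbit p x -> orbit_rep y = orbit_rep x.
Proof.
move=> xy; rewrite /orbit_rep (porbit_eq xy).
by case: pickP => //= /(_ x); rewrite porbit_id.
Qed.

Lemma first_mark_porbit x : first_mark x \in porbit p x.
Proof.
by rewrite /first_mark; case: pickP => [e /andP[]|_] //=; apply: orbit_rep_porbit.
Qed.

Lemma first_mark_invariant x y :
  y \in porbit p x -> first_mark y = first_mark x.
Proof.
by move=> xy; rewrite /first_mark (porbit_eq xy) (orbit_rep_invariant xy).
Qed.

Lemma second_mark_porbit x : second_mark x \in porbit p x.
Proof.
by rewrite /second_mark; case: pickP => [e /andP[]|_] //=; apply: first_mark_porbit.
Qed.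

Lemma second_mark_invariant x y :
  y \in porbit p x -> second_mark y = second_mark x.
Proof.
by move=> xy; rewrite /second_mark (porbit_eq xy) (first_mark_invariant xy).
Qed.

Lemma first_mark_neq0 x e :
  e \in porbit p x -> w e != 0 -> w (first_mark x) != 0.
Proof.
move=> xe we; rewrite /first_mark.
by case: pickP => [f /andP[]|/(_ e)] //=; rewrite xe we.
Qed.

Definition mark_reflection := cycle_reflection p first_mark second_mark.

Lemma mark_reflectionK : involutive mark_reflection.
Proof.
exact: (cycle_reflectionK first_mark_porbit second_mark_porbit
  first_mark_invariant second_mark_invariant).
Qed.

Lemma mark_reflection_perm x :
  mark_reflection (p x) = (p^-1)%g (mark_reflection x).
Proof.
exact: (cycle_reflection_perm first_mark_porbit second_mark_porbit
  first_mark_invariant second_mark_invariant).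
Qed.

Lemma mark_reflection_porbit x : mark_reflection x \in porbit p x.
Proof.
exact: (cycle_reflection_porbit first_mark_porbit second_mark_porbit
  first_mark_invariant second_mark_invariant).
Qed.

Lemma mark_reflection_first x : mark_reflection (first_mark x) = second_mark x.
Proof.
exact: (cycle_reflection_anchor first_mark_porbit second_mark_porbit
  first_mark_invariant second_mark_invariant).
Qed.

Lemma mark_reflection_second x : mark_reflection (second_mark x) = first_mark x.
Proof. by rewrite -mark_reflection_first mark_reflectionK. Qed.

Hypothesis weight_small : \sum_e w e <= 2.

Lemma second_mark_weight x : w (second_mark x) = w (first_mark x).
Proof.
rewrite /second_mark; case: pickP => [e /and3P[xe we ea] | _] //=.
have := first_mark_neq0 xe we; have := leq_pair_sum w ea.
by move: we weight_small; lia.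
Qed.

Lemma unmarked_weight x e :
  e \in porbit p x -> e != first_mark x -> e != second_mark x -> w e = 0.
Proof.
move=> xe ea eb; apply/eqP; apply: contraTT weight_small => we.
have wa := first_mark_neq0 xe we.
move: eb; rewrite /second_mark.
case: pickP => [b /and3P[_ wb ba] /= eb | /(_ e)]; last by rewrite xe we ea.
rewrite eq_sym in ba.
by have := leq_triple_sum w ea eb ba; move: wa wb we; lia.
Qed.

Lemma mark_reflection_weight x : w (mark_reflection x) = w x.
Proof.
have [xa|xa] := eqVneq x (first_mark x).
  by rewrite {1}xa mark_reflection_first second_mark_weight -xa.
have [xb|xb] := eqVneq x (second_mark x).
  by rewrite {1}xb mark_reflection_second -second_mark_weight -xb.
have ha : mark_reflection x != first_mark x.
  by apply: contraNneq xb => E; rewrite -{1}(mark_reflectionK x) E mark_reflection_first.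
have hb : mark_reflection x != second_mark x.
  by apply: contraNneq xa => E; rewrite -{1}(mark_reflectionK x) E mark_reflection_second.
rewrite (unmarked_weight (mark_reflection_porbit x)) //.
by rewrite (unmarked_weight (porbit_id p x)).
Qed.

End SmallWeightCycles.

Lemma edgeE n (X : wperm n) v1 v2 a :
  edge X v1 v2 a = (wp_perm X v1 == v2) && (wp_weight X v1 == a).
Proof.
apply/existsP/andP => [[i /and3P[/eqP <- -> ->]] | [H1 H2]] //.
by exists v1; rewrite eqxx H1 H2.
Qed.

Lemma reflection_same_wcycle_type n (X : wperm n) (h : 'I_n -> 'I_n) :
  involutive h -> (forall x, h (wp_perm X x) = ((wp_perm X)^-1)%g (h x)) ->
  (forall x, wp_weight X (h x) = wp_weight X x) ->
  same_wcycle_type X (wdagger X).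
Proof.
move=> hK hp hw; exists (perm (inv_inj hK) * wp_perm X)%g => v1 v2 a.
have hE : perm (inv_inj hK) =1 h := permE _.
rewrite !edgeE /= ffunE !permM !hE permK hw.
rewrite -[h v1 == _](inj_eq (inv_inj hK)) hK hp hK.
by rewrite -[v1 == _](inj_eq (@perm_inj _ (wp_perm X))) permKV.
Qed.

Theorem lemma2p12 (n : nat) (X : wperm n) :
  1 <= n -> total_weight X <= 2 -> same_wcycle_type X (wdagger X).
Proof.
move=> _ small.
apply: (reflection_same_wcycle_type (mark_reflectionK _ _)).
  exact: mark_reflection_perm.
exact: mark_reflection_weight.
Qed.
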